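(* Let $\kappa\ge 0$. Suppose $\bar{\mathbf x}\in\mathbf X$ satisfies $$\sum_{a\in\mathcal A}\sum_{w\in\mathcal W}\bar\lambda^w_a\, t_a(\bar{\mathbf v})\,(x^w_a-\bar x^w_a)\ \ge\ 0\qquad\text{for all }\mathbf x\in\mathbf X,$$ where $\bar v_a=\sum_{w\in\mathcal W}\bar x^w_a$, for some constants $\bar\lambda^w_a\in[\tfrac{1}{1+\kappa},1]$ ($w\in\mathcal W$, $a\in\mathcal A$). Then every path flow $\bar{\mathbf f}\in\mathbf F$ with $\bar x^w_a=\sum_{p\in\mathcal P_w}\delta^p_a\bar f_p$ for all $a\in\mathcal A$, $w\in\mathcal W$ is a $\kappa$-multiplicative satisficing user equilibrium ($\kappa$-MSatUE).
   Context: Let $G=(\mathcal N,\mathcal A)$ be a finite directed graph and $\mathcal W$ a finite set of origin–destination (OD) pairs; each $w\in\mathcal W$ has a demand $Q_w>0$ and a finite set $\mathcal P_w$ of paths from its origin to its destination; $\mathcal P=\bigcup_{w}\mathcal P_w$. Let $\delta^p_a=1$ if arc $a$ lies on path $p$ and $0$ otherwise. The feasible path flows are $\mathbf F=\{\mathbf f\ge 0:\sum_{p\in\mathcal P_w}f_p=Q_w\ \forall w\in\mathcal W\}$. A path flow $\mathbf f$ determines arc flows $v_a=\sum_{p\in\mathcal P}\delta^p_af_p$ (the set of these is $\mathbf V$) and OD-specific arc flows $x^w_a=\sum_{p\in\mathcal P_w}\delta^p_af_p$ (the set of these is $\mathbf X$); note $v_a=\sum_w x^w_a$. Each arc $a$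 has a travel time function $t_a(\mathbf v)$ of the arc-flow vector. The path travel time is $c_p(\mathbf f)=\sum_{a\in\mathcal A}\delta^p_a t_a(\mathbf v)$, where $\mathbf v$ is the arc flow induced by $\mathbf f$. For $\kappa\ge0$, a flow $\mathbf f\in\mathbf F$ is a $\kappa$-MSatUE if for every $w\in\mathcal W$ and $p\in\mathcal P_w$: $f_p>0\implies c_p(\mathbf f)\le(1+\kappa)\min_{p'\in\mathcal P_w}c_{p'}(\mathbf f)$. *)

From mathcomp Require Import all_boot all_order all_algebra.
From mathcomp Require Import reals.
Set Implicit Arguments. Unset Strict Implicit. Unset Printing Implicit Defensive.
Import Order.TTheory GRing.Theory Num.Theory.
Local Open Scope ring_scope.

(* Network data:
   A : finite set of arcs, W : finite set of OD pairs, P : finite set of all paths,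
   od p : the OD pair w with p \in P_w (the P_w partition P),
   delta p a : arc a lies on path p  (delta^p_a = (delta p a)%:R),
   Q w : demand, t v a : travel time of arc a under arc-flow vector v. *)

Definition feasible (R : realType) (W P : finType) (od : P -> W) (Q : W -> R)
  (f : P -> R) : Prop :=
  (forall p, 0 <= f p) /\ (forall w, \sum_(p | od p == w) f p = Q w).

Definition arc_flow (R : realType) (A P : finType) (delta : P -> A -> bool)
  (f : P -> R) (a : A) : R :=
  \sum_(p : P) (delta p a)%:R * f p.

Definition od_arc_flow (R : realType) (A W P : finType) (od : P -> W)
  (delta : P -> A -> bool) (f : P -> R) (w : W) (a : A) : R :=
  \sum_(p : P | od p == w) (delta p a)%:R * f p.

Definition in_X (R : realType) (A W P : finType) (od : P -> W)
  (delta : P -> A -> bool) (Q : W -> R) (x : W -> A -> R) : Prop :=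
  exists f : P -> R, feasible od Q f /\
    (forall w a, x w a = od_arc_flow od delta f w a).

Definition path_cost (R : realType) (A P : finType) (delta : P -> A -> bool)
  (t : (A -> R) -> A -> R) (f : P -> R) (p : P) : R :=
  \sum_(a : A) (delta p a)%:R * t (arc_flow delta f) a.

(* kappa-MSatUE: f \in F and for every w, p \in P_w with f_p > 0,
   c_p(f) <= (1+kappa) * min_{p' \in P_w} c_{p'}(f)
   (the minimum over the finite nonempty set P_w, written out as a bound
   against every p' \in P_w). *)
Definition MSatUE (R : realType) (A W P : finType) (od : P -> W)
  (delta : P -> A -> bool) (Q : W -> R) (t : (A -> R) -> A -> R)
  (kappa : R) (f : P -> R) : Prop :=
  feasible od Q f /\
  forall p : P, 0 < f p ->
    forall p' : P, od p' = od p ->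
      path_cost delta t f p <= (1 + kappa) * path_cost delta t f p'.

From mathcomp Require Import all_boot all_order all_algebra.
From mathcomp Require Import reals.
From mathcomp Require Import boolp ring lra.
Import Order.TTheory GRing.Theory Num.Theory.
Local Open Scope ring_scope.

(* Let p carry positive flow and let p' serve the same OD pair. Moving
   all the flow of p onto p' gives another point of X, and the variational
   inequality evaluated there says that the lambda-weighted cost of p is at
   most that of p'. Since lambda lies in [1/(1+kappa), 1], the true cost of p
   is at most (1+kappa) times its weighted cost, and the weighted cost of p'
   is at most its true cost. *)

Lemma sum_indicator_mul {R : pzSemiRingType} {S : finType} (Pr : pred S)
    (r : S) (g : S -> R) :
  \sum_(q | Pr q) (q == r)%:R * g q = (Pr r)%:R * g r.
Proof.
rewrite big_mkcond (bigD1 r) //= eqxx mul1r big1 ?addr0.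
  by case: (Pr r); rewrite ?mul1r ?mul0r.
by move=> q /negbTE ->; case: (Pr q); rewrite ?mul0r.
Qed.

Section Network.

Context {R : realType} {A W P : finType} (od : P -> W) (delta : P -> A -> bool).

Lemma sum_od_arc_flow (f : P -> R) (a : A) :
  \sum_(w : W) od_arc_flow od delta f w a = arc_flow delta f a.
Proof.
by rewrite /arc_flow (partition_big od xpredT) //=; apply: eq_bigr.
Qed.

(* All the flow of p is moved onto p'; for p' = p the flow is unchanged. *)
Definition shift_flow (f : P -> R) (p p' : P) (q : P) : R :=
  f q + ((q == p')%:R - (q == p)%:R) * f p.

Lemma shift_flow_feasible (Q : W -> R) (f : P -> R) (p p' : P) :
  od p' = od p -> feasible od Q f -> feasible od Q (shift_flow f p p').
Proof.
move=> hod [f_ge0 f_demand]; split=> [q | w].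
  rewrite /shift_flow; have [-> | qp] := eqVneq q p.
    by rewrite mulrBl mul1r addrC subrK mulr_ge0.
  by rewrite subr0 addr_ge0 ?mulr_ge0.
rewrite /shift_flow big_split /= f_demand -mulr_suml sumrB.
have sum_eq r : \sum_(q | od q == w) (q == r)%:R = (od r == w)%:R :> R.
  have := sum_indicator_mul (fun q => od q == w) r (fun=> 1 : R).
  by rewrite /= mulr1 => <-; apply: eq_bigr => q _; rewrite mulr1.
by rewrite !sum_eq hod subrr mul0r addr0.
Qed.

Lemma od_arc_flow_shift (f : P -> R) (p p' : P) (w : W) (a : A) :
  od p' = od p ->
  od_arc_flow od delta (shift_flow f p p') w a - od_arc_flow od delta f w a
    = (w == od p)%:R * (((delta p' a)%:R - (delta p a)%:R) * f p).
Proof.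
move=> hod; rewrite /od_arc_flow -sumrB.
under eq_bigr do rewrite /shift_flow mulrDr addrAC subrr add0r mulrBl mulrBr
   !(mulrCA (delta _ a)%:R).
by rewrite sumrB !sum_indicator_mul /= hod (eq_sym (od p) w); ring.
Qed.

Definition weighted_cost (c : W -> A -> R) (p : P) : R :=
  \sum_(a : A) (delta p a)%:R * c (od p) a.

Lemma shift_variation (c : W -> A -> R) (f : P -> R) (p p' : P) :
  od p' = od p ->
  \sum_(a : A) \sum_(w : W) c w a *
      (od_arc_flow od delta (shift_flow f p p') w a - od_arc_flow od delta f w a)
    = (weighted_cost c p' - weighted_cost c p) * f p.
Proof.
move=> hod; rewrite /weighted_cost hod -sumrB mulr_suml; apply: eq_bigr => a _.
under eq_bigr do rewrite od_arc_flow_shift // mulrCA.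
by rewrite (sum_indicator_mul xpredT) /=; ring.
Qed.

Section Weights.

Context {kappa : R} {lambda : W -> A -> R} {T : A -> R}.
Hypothesis T_ge0 : forall a, 0 <= T a.

Lemma cost_le_scaled_weighted_cost (p : P) :
  0 <= kappa -> (forall w a, (1 + kappa)^-1 <= lambda w a) ->
  \sum_(a : A) (delta p a)%:R * T a
    <= (1 + kappa) * weighted_cost (fun w a => lambda w a * T a) p.
Proof.
move=> kappa_ge0 lambda_ge; rewrite mulr_sumr; apply: ler_sum => a _.
have kappa1_gt0 : 0 < 1 + kappa by rewrite ltr_wpDr.
have scaled_ge1 : 1 <= (1 + kappa) * lambda (od p) a.
  by rewrite -[X in X <= _](mulfV (lt0r_neq0 kappa1_gt0)) ler_pM2l.
have := mulr_ge0 (ler0n _ (delta p a)) (T_ge0 a); nra.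
Qed.

Lemma weighted_cost_le_cost (p : P) :
  (forall w a, lambda w a <= 1) ->
  weighted_cost (fun w a => lambda w a * T a) p
    <= \sum_(a : A) (delta p a)%:R * T a.
Proof.
move=> lambda_le1; apply: ler_sum => a _; have := lambda_le1 (od p) a.
have := mulr_ge0 (ler0n _ (delta p a)) (T_ge0 a); nra.
Qed.

End Weights.

End Network.

Theorem lemma1 (R : realType) (A W P : finType) (od : P -> W)
  (delta : P -> A -> bool) (Q : W -> R) (t : (A -> R) -> A -> R)
  (kappa : R)
  (hQ : forall w, 0 < Q w)
  (ht : forall (v : A -> R) (a : A), 0 <= t v a)
  (hkappa : 0 <= kappa)
  (xbar : W -> A -> R) (lambda : W -> A -> R)
  (hxbar : in_X od delta Q xbar)
  (hlambda : forall w a, (1 + kappa)^-1 <= lambda w a /\ lambda w a <= 1)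
  (hVI : forall x : W -> A -> R, in_X od delta Q x ->
     0 <= \sum_(a : A) \sum_(w : W)
            lambda w a * t (fun a' => \sum_(w' : W) xbar w' a') a
              * (x w a - xbar w a))
  (fbar : P -> R)
  (hfbar : feasible od Q fbar)
  (hfx : forall (a : A) (w : W), xbar w a = od_arc_flow od delta fbar w a) :
  MSatUE od delta Q t kappa fbar.
Proof.
split=> // p fp_gt0 p' hod.
have xbarE : xbar = od_arc_flow od delta fbar.
  by do 2!apply: funext => ?; rewrite hfx.
subst xbar; set T := t (arc_flow delta fbar).
have shift_in_X : in_X od delta Q (od_arc_flow od delta (shift_flow fbar p p')).
  by exists (shift_flow fbar p p'); split=> //; apply: shift_flow_feasible.
have := hVI _ shift_in_X.
rewrite (funext (sum_od_arc_flow od delta fbar)) -/T.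
rewrite (shift_variation od delta (fun w a => lambda w a * T a)) //.
rewrite pmulr_lge0 // subr_ge0 => weighted_le.
rewrite /path_cost -/T.
apply: le_trans
  (cost_le_scaled_weighted_cost od delta (ht _) p hkappa (fun w a => proj1 (hlambda w a))) _.
rewrite ler_wpM2l ?addr_ge0 //; apply: le_trans weighted_le _.
exact: (weighted_cost_le_cost od delta (ht _) p' (fun w a => proj2 (hlambda w a))).
Qed.
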